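(* Every fully $\mathrm{A}^{+1}$-representable finite distributive lattice has at most one join-reducible coatom.
   Context: For a finite lattice $D$, $J(D)$ is the set of nonzero join-irreducible elements and $J^+(D)=J(D)\cup\{0,1\}$. For an algebra $A$, $\mathrm{Con}(A)$ is its congruence lattice and $\mathrm{Princ}(A)$ its set of principal congruences. $D$ is fully $\mathrm{A}^{+1}$-representable if for every $Q$ with $J^+(D)\subseteq Q\subseteq D$ there exist an algebra $A$ and a lattice isomorphism $\phi\colon\mathrm{Con}(A)\to D$ with $\phi(\mathrm{Princ}(A))=Q$. A coatom is an element covered by $1$; it is join-reducible if it is not join-irreducible. *)

From HB Require Import structures.
From mathcomp Require Import all_boot all_order.
Set Implicit Arguments. Unset Strict Implicit. Unset Printing Implicit Defensive.
Import Order.TTheory.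
Local Open Scope order_scope.

Record algebra := Algebra {
  carrier : Type;
  opidx : Type;
  arity : opidx -> nat;
  op : forall i : opidx, ('I_(arity i) -> carrier) -> carrier }.

Definition subrel (T : Type) (R S : T -> T -> Prop) := forall x y, R x y -> S x y.

Definition congruence (A : algebra) (R : carrier A -> carrier A -> Prop) :=
  [/\ (forall x, R x x), (forall x y, R x y -> R y x),
      (forall x y z, R x y -> R y z -> R x z) &
      (forall (i : opidx A) (f g : 'I_(arity i) -> carrier A),
          (forall k, R (f k) (g k)) -> R (op f) (op g))].

Definition princ (A : algebra) (a b : carrier A) : carrier A -> carrier A -> Prop :=
  fun x y => forall S, congruence S -> S a b -> S x y.

(* phi : Con(A) -> D is a lattice isomorphism (= order isomorphism between
   lattices); Con(A) ordered by inclusion, elements compared extensionally. *)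
Definition con_iso (A : algebra) d (D : porderType d)
    (phi : (carrier A -> carrier A -> Prop) -> D) :=
  (forall R S, congruence R -> congruence S -> (subrel R S <-> phi R <= phi S)) /\
  (forall x : D, exists R, congruence R /\ phi R = x).

Definition join_irr d (D : finTBDistrLatticeType d) (x : D) :=
  x != \bot /\ forall y z : D, x = y `|` z -> x = y \/ x = z.

Definition in_Jplus d (D : finTBDistrLatticeType d) (x : D) :=
  [\/ x = \bot, x = \top | join_irr x].

Definition coatom d (D : finTBDistrLatticeType d) (x : D) :=
  x < \top /\ ~ exists y : D, x < y /\ y < \top.

Definition fully_A1_representable d (D : finTBDistrLatticeType d) :=
  forall Q : {set D}, (forall x : D, in_Jplus x -> x \in Q) ->
    exists (A : algebra) (phi : (carrier A -> carrier A -> Prop) -> D),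
      con_iso phi /\
      forall x : D, x \in Q <-> exists a b : carrier A, phi (princ a b) = x.

From Pilot Require Import Defs.
From HB Require Import structures.
From mathcomp Require Import all_boot all_order.
From Stdlib Require Import FunctionalExtensionality.
Set Implicit Arguments. Unset Strict Implicit. Unset Printing Implicit Defensive.
Import Order.TTheory.
Local Open Scope order_scope.

(* Suppose a != b are join-reducible coatoms, and represent Q = J^+(D) ∪ {a ∧ b}
   with con(s,t) mapped to a ∧ b.  If w is in the a-class of s, then con(w,s),
   con(w,t) and con(s,t) all lie in Q below a and satisfy the triangle
   inequalities, which forces con(w,s) <= a ∧ b: otherwise con(w,s) would be a
   join-irreducible c with a ∧ b <= c <= a and c ∨ b = 1, i.e. c = a.  Hence the
   a-class and the b-class of s both coincide with its con(s,t)-class, which is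
   therefore closed under the join of the two congruences.  As a ∨ b = 1 that
   join is the full relation, so con(s,t) would be 1 > a ∧ b. *)

Section Lattice.
Variables (d : Order.disp_t) (D : finTBDistrLatticeType d).
Implicit Types (a b c j x y : D).

Definition join_irrb x :=
  (x != \bot) && [forall y, [forall z, (x == y `|` z) ==> (x == y) || (x == z)]].

Lemma join_irrP x : reflect (join_irr x) (join_irrb x).
Proof.
apply: (iffP andP) => [[nx /forallP Hx]|[nx Hx]]; split=> //.
  move=> y z xE; move: (Hx y) => /forallP /(_ z).
  by rewrite xE eqxx /= => /orP[]/eqP ->; [left|right].
apply/forallP => y; apply/forallP => z; apply/implyP => /eqP /Hx.
by case=> <-; rewrite eqxx ?orbT.
Qed.

Lemma in_JplusP x : reflect (in_Jplus x) [|| x == \bot, x == \top | join_irrb x].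
Proof.
apply: (iffP or3P) => [[/eqP|/eqP|/join_irrP]|[->|->|/join_irrP]];
  by [constructor | constructor 2 | constructor 3].
Qed.

Lemma join_irr_prime j x y : join_irr j -> j <= x `|` y -> j <= x \/ j <= y.
Proof.
move=> [_ Hj] jxy.
have : j = (j `&` x) `|` (j `&` y) by rewrite -meetUr; apply/esym/meet_idPl.
by case/Hj => ->; [left|right]; rewrite leIr.
Qed.

Lemma coatom_neq_top a c : coatom a -> c <= a -> c != \top.
Proof. by case=> a1 _ ca; rewrite lt_eqF // (le_lt_trans ca a1). Qed.

Lemma coatom_joinE a j : coatom a -> ~~ (j <= a) -> j `|` a = \top.
Proof.
move=> [_ noMid] nja; apply/eqP/negPn/negP => jaN1; apply: noMid.
exists (j `|` a); split; last by rewrite lt_neqAle jaN1 lex1.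
by rewrite lt_neqAle leUr andbT; apply: contra nja => /eqP ->; apply: leUl.
Qed.

Lemma coatom_join_neq a b : coatom a -> coatom b -> a != b -> a `|` b = \top.
Proof.
move=> [_ noMid] Cb ab; have [b1 _] := Cb; apply: coatom_joinE Cb _.
apply/negP => ab_le; apply: noMid; exists b; split => //.
by rewrite lt_neqAle ab ab_le.
Qed.

Lemma meet_sandwich a b c : c <= a -> a `&` b <= c -> c `|` b = \top -> c = a.
Proof.
by move=> ca abc cb1; rewrite -[a]meetx1 -cb1 meetUr (meet_idPr ca) (join_idPl abc).
Qed.

(* The lattice core of the argument: [c] and [c'] play the roles of con(w,s)
   and con(w,t), and [a `&` b] that of con(s,t). *)
Lemma le_meet_of_triangle a b c c' : coatom a -> coatom b -> ~ join_irr a ->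
  in_Jplus c \/ c = a `&` b -> in_Jplus c' \/ c' = a `&` b ->
  c <= a -> c' <= a ->
  c' <= c `|` (a `&` b) -> c <= c' `|` (a `&` b) -> a `&` b <= c `|` c' ->
  c <= a `&` b.
Proof.
move=> Ca Cb Na Qc Qc' ca c'a c'_le c_le ab_le.
case: (boolP (c <= a `&` b)) => // ncab; exfalso.
have Jc : join_irr c.
  case: Qc => [[c0|c1|//]|cab]; last by rewrite cab lexx in ncab.
    by rewrite c0 le0x in ncab.
  by move: (coatom_neq_top Ca ca); rewrite c1 eqxx.
have cc' : c <= c' by case: (join_irr_prime Jc c_le) => // cab; rewrite cab in ncab.
have Jc' : join_irr c'.
  case: Qc' => [[c'0|c'1|//]|c'ab]; last by rewrite -c'ab cc' in ncab.
    by case: Jc => /negP[]; rewrite -lex0 -c'0.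
  by move: (coatom_neq_top Ca c'a); rewrite c'1 eqxx.
have c'c : c' <= c.
  by case: (join_irr_prime Jc' c'_le) => // c'ab; rewrite (le_trans cc' c'ab) in ncab.
have /le_anti c'E : (c' <= c <= c') by rewrite c'c cc'.
rewrite c'E joinxx in ab_le.
apply: Na; rewrite -(meet_sandwich ca ab_le) //.
apply: coatom_joinE Cb _; apply: contra ncab => cb.
by rewrite lexI ca cb.
Qed.

End Lattice.

Section Congruences.
Variable A : algebra.
Notation T := (carrier A).
Implicit Types (R S : T -> T -> Prop) (a b x y : T).

Lemma princ_congruence a b : congruence (princ a b).
Proof.
split.
- by move=> x S [].
- by move=> x y xy S CS Sab; case: (CS) => _ sym _ _; apply/sym/(xy S).
- move=> x y z xy yz S CS Sab; case: (CS) => _ _ trans _.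
  by apply: (trans _ y); [apply: xy | apply: yz].
- by move=> i f g fg S CS Sab; case: (CS) => _ _ _; apply=> k; apply: fg.
Qed.

Lemma princ_pair a b : princ a b a b.
Proof. by []. Qed.

Lemma princ_min a b S : congruence S -> S a b -> Defs.subrel (princ a b) S.
Proof. by move=> CS Sab x y; apply. Qed.

Lemma princC a b : Defs.subrel (princ a b) (princ b a).
Proof.
apply: princ_min; first exact: princ_congruence.
by case: (princ_congruence b a) => _ sym _ _; apply: sym.
Qed.

Definition update (n : nat) (f : 'I_n -> T) (k : 'I_n) x : 'I_n -> T :=
  fun j => if j == k then x else f j.

(* Compatibility follows from compatibility in one argument at a time, by
   replacing the arguments of [f] by those of [g] one by one. *)
Lemma compatible_of_update R : (forall x, R x x) ->
  (forall x y z, R x y -> R y z -> R x z) ->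
  (forall i f k x y, R x y -> R (@op A i (update f k x)) (op (update f k y))) ->
  forall i (f g : 'I_(arity i) -> T), (forall k, R (f k) (g k)) -> R (op f) (op g).
Proof.
move=> refl trans upd i f g fg.
pose h (m : nat) (k : 'I_(arity i)) := if (k < m)%N then g k else f k.
suff hR m : R (op f) (op (h m)).
  have := hR (arity i); congr (R _ (op _)).
  by apply: functional_extensionality => k; rewrite /h ltn_ord.
elim: m => [|m IH]; first exact: refl.
apply: (trans _ _ _ IH); case: (ltnP m (arity i)) => [lt_m|le_m]; last first.
  rewrite (_ : h m.+1 = h m) //; apply: functional_extensionality => k.
  by rewrite /h ltnS !(leq_trans (ltn_ord k) le_m) ?(ltnW (leq_trans (ltn_ord k) le_m)).
pose mo := Ordinal lt_m.
have -> : h m = update (h m) mo (f mo).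
  by apply: functional_extensionality => k; rewrite /update /h; case: eqP => // ->; rewrite ltnn.
have -> : h m.+1 = update (h m) mo (g mo).
  apply: functional_extensionality => k; rewrite /update /h ltnS leq_eqVlt.
  case: (eqVneq k mo) => [->|kmo]; first by rewrite eqxx.
  by move: kmo; rewrite -(inj_eq val_inj) => /negbTE ->.
by apply: upd; apply: fg.
Qed.

Section Chain.
Variables R1 R2 : T -> T -> Prop.
Hypotheses (C1 : congruence R1) (C2 : congruence R2).

(* The join of [R1] and [R2] in Con(A). *)
Inductive chain : T -> T -> Prop :=
| chain_refl x : chain x x
| chain_step x y z : R1 x y \/ R2 x y -> chain y z -> chain x z.

Lemma chain_trans x y z : chain x y -> chain y z -> chain x z.
Proof. by elim=> // x0 y0 z0 step _ IH /IH; apply: chain_step. Qed.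

Lemma chain_closed (P : T -> Prop) :
  (forall x y, R1 x y -> P x -> P y) -> (forall x y, R2 x y -> P x -> P y) ->
  forall x y, chain x y -> P x -> P y.
Proof. by move=> P1 P2 x y; elim=> // x0 y0 z0 [/P1|/P2] Py _ IH /Py. Qed.

Lemma chain_map (c : T -> T) :
  (forall x y, R1 x y -> R1 (c x) (c y)) -> (forall x y, R2 x y -> R2 (c x) (c y)) ->
  forall x y, chain x y -> chain (c x) (c y).
Proof.
move=> c1 c2 x y; elim=> [x0|x0 y0 z0 step _ IH]; first exact: chain_refl.
by apply: chain_step IH; case: step => [/c1|/c2]; [left|right].
Qed.

Lemma chain_congruence : congruence chain.
Proof.
have [refl1 sym1 _ comp1] := C1; have [refl2 sym2 _ comp2] := C2.
split; [exact: chain_refl | | exact: chain_trans | ].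
  move=> x y; elim=> [x0|x0 y0 z0 step _ IH]; first exact: chain_refl.
  apply: chain_trans IH (chain_step _ (chain_refl x0)).
  by case: step => [/sym1|/sym2]; [left|right].
apply: compatible_of_update => [||i f k x y]; [exact: chain_refl | exact: chain_trans |].
apply: (chain_map (c := fun z => op (update f k z))) => u v uv.
- by apply: comp1 => j; rewrite /update; case: eqP => // _; apply: refl1.
- by apply: comp2 => j; rewrite /update; case: eqP => // _; apply: refl2.
Qed.

Lemma full_of_chain_class Th s : congruence Th ->
  Defs.subrel Th R1 -> Defs.subrel Th R2 ->
  (forall w, R1 s w -> Th s w) -> (forall w, R2 s w -> Th s w) ->
  (forall x y, chain x y) -> forall x y, Th x y.
Proof.
move=> [reflTh symTh transTh _] Th1 Th2 class1 class2 full.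
have class_s u : Th s u.
  apply: (chain_closed (P := Th s) _ _ (full s u)) => // x y xy sx.
  - by case: C1 => _ _ trans1 _; apply/class1/(trans1 _ x _ (Th1 _ _ sx) xy).
  - by case: C2 => _ _ trans2 _; apply/class2/(trans2 _ x _ (Th2 _ _ sx) xy).
by move=> x y; apply: (transTh _ s); [apply: symTh |]; apply: class_s.
Qed.

End Chain.
End Congruences.

Section Representation.
Variables (A : algebra) (d : Order.disp_t) (D : finTBDistrLatticeType d).
Variable phi : (carrier A -> carrier A -> Prop) -> D.
Hypothesis iso : con_iso phi.
Notation T := (carrier A).
Implicit Types (R S : T -> T -> Prop) (p q r : T).

Lemma subrel_of_phi_le R S :
  congruence R -> congruence S -> phi R <= phi S -> Defs.subrel R S.
Proof. by move=> CR CS le_RS; apply/(proj1 iso _ _ CR CS). Qed.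

Lemma phi_le_of_subrel R S :
  congruence R -> congruence S -> Defs.subrel R S -> phi R <= phi S.
Proof. by move=> CR CS le_RS; apply/(proj1 iso _ _ CR CS). Qed.

Lemma phi_princC p q : phi (princ p q) = phi (princ q p).
Proof.
by apply: le_anti; rewrite !phi_le_of_subrel //; do ?exact: princ_congruence; apply: princC.
Qed.

Lemma phi_princ_triangle p q r :
  phi (princ p r) <= phi (princ p q) `|` phi (princ q r).
Proof.
have [R [CR phiR]] := proj2 iso (phi (princ p q) `|` phi (princ q r)).
have [pq qr] : Defs.subrel (princ p q) R /\ Defs.subrel (princ q r) R.
  by split; apply: subrel_of_phi_le; rewrite ?phiR ?leUl ?leUr //; apply: princ_congruence.
rewrite -phiR phi_le_of_subrel //; first exact: princ_congruence.
apply: princ_min => //; case: (CR) => _ _ trans _.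
by apply: (trans _ q); [apply: pq | apply: qr].
Qed.

Lemma phi_chain R1 R2 : congruence R1 -> congruence R2 ->
  phi R1 `|` phi R2 <= phi (chain R1 R2).
Proof.
move=> C1 C2; have C12 := chain_congruence C1 C2.
rewrite leUx !phi_le_of_subrel // => x y xy;
  apply: chain_step (chain_refl _ _ y); by [left | right].
Qed.

Lemma phi_eq_topP R : congruence R -> phi R = \top <-> forall x y, R x y.
Proof.
have Cfull : congruence (fun _ _ : T => True) by [].
have [Rtop [Ctop phiTop]] := proj2 iso \top.
move=> CR; split=> [phiR|full].
  have le_full : phi (fun _ _ => True) <= phi R by rewrite phiR lex1.
  by move=> x y; apply: (subrel_of_phi_le Cfull CR le_full).
by apply/le_anti; rewrite lex1 -phiTop phi_le_of_subrel.
Qed.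

Lemma princ_class_of_coatom a b s t Ra :
  coatom a -> coatom b -> ~ join_irr a ->
  (forall p q, in_Jplus (phi (princ p q)) \/ phi (princ p q) = a `&` b) ->
  phi (princ s t) = a `&` b -> congruence Ra -> phi Ra = a ->
  forall w, Ra s w -> princ s t s w.
Proof.
move=> Ca Cb Na Q phi_st CRa phiRa w sw.
have [_ symRa transRa _] := CRa.
have st : Ra s t.
  by apply: (subrel_of_phi_le (princ_congruence s t)) => //; rewrite phi_st phiRa leIl.
have below_a p q : Ra p q -> phi (princ p q) <= a.
  by move=> pq; rewrite -phiRa phi_le_of_subrel //; [apply: princ_congruence | apply: princ_min].
have wt_le := phi_princ_triangle w s t.
have ws_le := phi_princ_triangle w t s.
have st_le := phi_princ_triangle s w t.
rewrite phi_st in wt_le; rewrite (phi_princC t s) phi_st in ws_le.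
rewrite (phi_princC s w) phi_st in st_le.
have ws_ab := le_meet_of_triangle Ca Cb Na (Q w s) (Q w t)
  (below_a _ _ (symRa _ _ sw)) (below_a _ _ (transRa _ _ _ (symRa _ _ sw) st))
  wt_le ws_le st_le.
have [_ symst _ _] := princ_congruence s t.
apply: symst; apply: (subrel_of_phi_le (princ_congruence w s) (princ_congruence s t)).
  by rewrite phi_st.
exact: princ_pair.
Qed.

End Representation.

Theorem lemma4p2 (d : Order.disp_t) (D : finTBDistrLatticeType d) :
  fully_A1_representable D ->
  forall x y : D, coatom x -> ~ join_irr x -> coatom y -> ~ join_irr y -> x = y.
Proof.
move=> reprD a b Ca Na Cb Nb; case: (eqVneq a b) => // ab; exfalso.
pose Q := [set z : D | (z == a `&` b) || [|| z == \bot, z == \top | join_irrb z]].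
have JQ z : in_Jplus z -> z \in Q by move=> /in_JplusP Jz; rewrite inE Jz orbT.
have [A [phi [iso phiQ]]] := reprD Q JQ.
have princQ p q : in_Jplus (phi (princ p q)) \/ phi (princ p q) = a `&` b.
  have : phi (princ p q) \in Q by apply/phiQ; exists p, q.
  by rewrite inE => /orP[/eqP|/in_JplusP]; [right | left].
have [s [t phi_st]] : exists s t, phi (princ s t) = a `&` b.
  by apply/phiQ; rewrite inE eqxx.
have [Ra [CRa phiRa]] := proj2 iso a.
have [Rb [CRb phiRb]] := proj2 iso b.
have class_a := princ_class_of_coatom iso Ca Cb Na princQ phi_st CRa phiRa.
have class_b : forall w, Rb s w -> princ s t s w.
  by apply: (princ_class_of_coatom iso Cb Ca Nb) => //; rewrite meetC.
have Cst := princ_congruence s t.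
have [st_a st_b] : Defs.subrel (princ s t) Ra /\ Defs.subrel (princ s t) Rb.
  split; [apply: (subrel_of_phi_le iso Cst CRa) | apply: (subrel_of_phi_le iso Cst CRb)];
    by rewrite ?phiRa ?phiRb phi_st ?leIl ?leIr.
have full_chain : forall x y, chain Ra Rb x y.
  apply/(phi_eq_topP iso (chain_congruence CRa CRb))/le_anti.
  by rewrite lex1 -(coatom_join_neq Ca Cb ab) -phiRa -phiRb phi_chain.
have := full_of_chain_class CRa CRb Cst st_a st_b class_a class_b full_chain.
move/(phi_eq_topP iso Cst); rewrite phi_st => ab1.
by move: (coatom_neq_top Ca (leIl a b)); rewrite ab1 eqxx.
Qed.
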